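(* For each integer $n\ge 0$, let $\overline{m}_o(n)$ be the number of overpartitions $\pi$ of $n$ into odd parts such that no positive integer less than $\mathrm{omoex}(\pi)$ appears as an overlined part of $\pi$, and let $\overline{M}_o(q)=\sum_{n\ge 0}\overline{m}_o(n)q^n$. Then $$\overline{M}_o(q)=\frac{(-q;q^2)_\infty}{(q;q^2)_\infty}\bigl(1-F(-q)\bigr),\qquad\text{where } F(q)=\sum_{n=1}^{\infty}\frac{(-1)^n q^{n^2}}{(q;q^2)_n}.$$
   Context: An overpartition of $n$ is a partition of $n$ (a non-increasing sequence of positive integers summing to $n$) in which the first occurrence of each distinct part value may be overlined; an overpartition into odd parts is one all of whose parts are odd. For an overpartition $\pi$ into odd parts, $\mathrm{omoex}(\pi)$ is the smallest positive odd integer that does not occur as a part of $\pi$, neither overlined nor non-overlined (the empty overpartition of $0$ has $\mathrm{omoex}=1$). Notation: $(a;q)_n=\prod_{k=0}^{n-1}(1-aq^k)$, $(a;q)_\infty=\prod_{k\ge 0}(1-aq^k)$; identities are of formal power series in $q$ (equivalently analytic for $|q|<1$). *)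

From mathcomp Require Import all_boot all_order all_algebra.
Set Implicit Arguments. Unset Strict Implicit. Unset Printing Implicit Defensive.
Import Order.TTheory GRing.Theory Num.Theory.
Local Open Scope ring_scope.

(* Formal power series in q over rat: f n is the coefficient of q^n.   *)
Definition fps := nat -> rat.

Definition fconst (c : rat) : fps := fun n => if n == 0%N then c else 0.
Definition fone : fps := fconst 1.
Definition fmono (c : rat) (k : nat) : fps := fun n => if n == k then c else 0.
Definition fadd (f g : fps) : fps := fun n => f n + g n.
Definition fopp (f : fps) : fps := fun n => - f n.
Definition fsub (f g : fps) : fps := fadd f (fopp g).
Definition fmul (f g : fps) : fps :=
  fun n => \sum_(i < n.+1) f i * g (n - i)%N.
Definition fprod (s : seq fps) : fps := foldr fmul fone s.

(* Multiplicative inverse of a series with nonzero constant term: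
   the unique g with f * g = 1, computed coefficient by coefficient
   g_0 = 1/f_0,  g_m = -(1/f_0) * sum_{i=1}^m f_i g_{m-i}. *)
Fixpoint finv_list (f : fps) (m : nat) : seq rat :=
  match m with
  | 0 => [:: (f 0%N)^-1]
  | m'.+1 =>
      let s := finv_list f m' in
      rcons s (- (f 0%N)^-1 *
               \sum_(1 <= i < m'.+2) f i * nth 0 s (m'.+1 - i)%N)
  end.
Definition finv (f : fps) : fps := fun m => nth 0 (finv_list f m) m.
Definition fdiv (f g : fps) : fps := fmul f (finv g).

Definition fnegq (f : fps) : fps := fun n => (-1) ^+ n * f n.

(* Infinite product prod_{k>=0} F k, as the q-adic limit of the partial
   products; valid (and used only) when F k = 1 + O(q^(k+1)), in which case
   the coefficient of q^n is already stable from the partial product over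
   k <= n. *)
Definition fprodinf (F : nat -> fps) : fps :=
  fun n => fprod [seq F k | k <- iota 0 n.+1] n.
(* Infinite sum sum_{k>=0} F k, as the q-adic limit of the partial sums;
   valid (and used only) when F k = O(q^k). *)
Definition fsuminf (F : nat -> fps) : fps :=
  fun n => \sum_(k < n.+1) F k n.

(* q-Pochhammer symbols (c q^e; q^b)_n and (c q^e; q^b)_oo =
   prod_k (1 - c q^(e + b k)).  The infinite one is only used with e >= 1. *)
Definition qfactor (c : rat) (e b k : nat) : fps :=
  fsub fone (fmono c (e + b * k)).
Definition qpoch (c : rat) (e b n : nat) : fps :=
  fprod [seq qfactor c e b k | k <- iota 0 n].
Definition qpoch_inf (c : rat) (e b : nat) : fps :=
  fprodinf (qfactor c e b).

(* F(q) = sum_{n>=1} (-1)^n q^(n^2) / (q;q^2)_n ; the summation index k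
   stands for n = k+1 (term k is O(q^(k+1)^2) hence O(q^k)). *)
Definition Fser : fps :=
  fsuminf (fun k => fdiv (fmono ((-1) ^+ k.+1) (k.+1 ^ 2)) (qpoch 1 1 2 k.+1)).

Definition rhs_series : fps :=
  fmul (fdiv (qpoch_inf (-1) 1 2) (qpoch_inf 1 1 2)) (fsub fone (fnegq Fser)).

(* An overpartition is a list of parts (value, overlined?)
   listed in non-increasing order of value, where an overlined part must be
   the first occurrence of its value.  This is encoded by the relation
   [op_before x y] required between every earlier entry x and later entry y. *)
Definition op_before (x y : nat * bool) : bool :=
  (y.1 < x.1)%N || ((y.1 == x.1) && ~~ y.2).

Definition parts (s : seq (nat * bool)) : seq nat := map fst s.

Definition is_odd_overpartition (n : nat) (s : seq (nat * bool)) : bool :=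
  [&& all (fun p => odd p.1) s, sumn (parts s) == n & pairwise op_before s].

(* omoex: smallest positive odd integer 2i+1 not occurring as a part
   (overlined or not).  Some i <= size s works, so the search is exhaustive. *)
Definition omoex (s : seq (nat * bool)) : nat :=
  (2 * find (fun i => (2 * i).+1 \notin parts s) (iota 0 (size s).+1)).+1.

Definition omo_condition (s : seq (nat * bool)) : bool :=
  all (fun p => p.2 ==> (omoex s <= p.1)%N) s.

Fixpoint lists_of {T : Type} (A : seq T) (m : nat) : seq (seq T) :=
  match m with
  | 0 => [:: [::]]
  | m'.+1 => [seq x :: l | x <- A, l <- lists_of A m']
  end.

(* Candidates: all lists of length <= n of entries (v, b) with 1 <= v <= n;
   every overpartition of n is among them (each part is >= 1 and <= n),
   each exactly once. *)
Definition candidates (n : nat) : seq (seq (nat * bool)) :=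
  flatten [seq lists_of [seq (v, b) | v <- iota 1 n, b <- [:: false; true]] m
          | m <- iota 0 n.+1].

Definition mbar_o (n : nat) : nat :=
  count (fun s => is_odd_overpartition n s && omo_condition s) (candidates n).

Definition Mbar_o : fps := fun n => (mbar_o n)%:R.

(* Let G_K be the generating function of the counted overpartitions all of whose parts are
   below 2K, and H_K that of those among them in which every odd number below 2K is a part.
   An overpartition counted by G_(K+1) is one counted by G_K preceded by m >= 0 copies of
   2K+1; the first copy may be overlined iff some smaller odd number is missing, i.e. iff
   the rest is not counted by H_K.  Hence
     (1 - q^(2K+1)) G_(K+1) = (1 - q^(2K+1)) G_K + q^(2K+1) (2 G_K - H_K),
     (1 - q^(2K+1)) H_(K+1) = q^(2K+1) H_K,
   so that H_K (q;q^2)_K = q^(K^2) and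
     G_K (q;q^2)_K = (-q;q^2)_K (1 - sum_(k=1..K) q^(k^2) / (-q;q^2)_k),
   where the sum is a partial sum of F(-q).  Both sides of the theorem agree with
   G_(n+1) up to q^n. *)

From HB Require Import structures.
From mathcomp Require Import all_boot all_order all_algebra.
From mathcomp Require Import boolp ring zify.
Set Implicit Arguments. Unset Strict Implicit. Unset Printing Implicit Defensive.
Import GRing.Theory.

Implicit Types (s u : seq (nat * bool)) (x : nat * bool).

(** * Odd overpartitions as lists *)

Lemma mem_lists_of (T : eqType) (A : seq T) m (s : seq T) :
  (s \in lists_of A m) = (size s == m) && all (mem A) s.
Proof.
elim: m s => [|m IH] [|x s] //=; first by apply/allpairsP => -[[y t] []].
apply/allpairsP/idP => [[[y t] /= [A_y] + [-> ->]]|].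
  by rewrite IH eqSS A_y => /andP [-> ->].
by rewrite eqSS => /andP [sz /andP [A_x A_s]]; exists (x, s); rewrite /= IH sz.
Qed.

Lemma lists_of_uniq (T : eqType) (A : seq T) m : uniq A -> uniq (lists_of A m).
Proof.
by move=> A_uniq; elim: m => //= m IH; apply: allpairs_uniq => // -[? ?] [? ?] _ _ [-> ->].
Qed.

Lemma mem_candidates n s :
  (s \in candidates n) = (size s <= n) && all (fun p => 0 < p.1 <= n) s.
Proof.
have memA p : (p \in [seq (v, b) | v <- iota 1 n, b <- [:: false; true]]) = (0 < p.1 <= n).
  apply/allpairsP/idP => [[[v b] [+ _ ->]]|]; first by rewrite mem_iota add1n ltnS.
  by case: p => v b /= le_vn; exists (v, b); rewrite mem_iota add1n ltnS le_vn; case: b.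
apply/flatten_mapP/idP => [[m]|/andP [le_sn s_bnd]].
  rewrite mem_iota ltnS mem_lists_of (eq_all memA).
  by move=> /andP [_ le_mn] /andP [/eqP -> ->]; rewrite le_mn.
by exists (size s); rewrite ?mem_iota ?ltnS // mem_lists_of eqxx (eq_all memA).
Qed.

Lemma candidates_uniq n : uniq (candidates n).
Proof.
have A_uniq : uniq [seq (v, b) | v <- iota 1 n, b <- [:: false; true]].
  by apply: allpairs_uniq; rewrite ?iota_uniq // => -[? ?] [? ?] _ _ [-> ->].
rewrite /candidates; elim: (iota 0 n.+1) (iota_uniq 0 n.+1) => //= m r IH /andP [m_r r_uniq].
rewrite cat_uniq lists_of_uniq // IH // andbT; apply/hasPn => s /flatten_mapP [m' m'_r].
rewrite !mem_lists_of => /andP [/eqP sz_s _]; apply/negP => /andP [/eqP sz_s' _].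
by move: m_r; rewrite -sz_s' sz_s m'_r.
Qed.

Lemma is_odd_overpartition_nil n : is_odd_overpartition n [::] = (n == 0).
Proof. by rewrite /is_odd_overpartition /= eq_sym andbT. Qed.

Lemma is_odd_overpartition_cons n x u :
  is_odd_overpartition n (x :: u) =
  [&& odd x.1, x.1 <= n, is_odd_overpartition (n - x.1) u & all (op_before x) u].
Proof.
rewrite /is_odd_overpartition /=.
have -> : (x.1 + sumn (parts u) == n) = (x.1 <= n) && (sumn (parts u) == n - x.1).
  case: leqP => [le_xn|lt_nx]; first by rewrite -{1}(subnKC le_xn) eqn_add2l.
  by apply/negbTE; rewrite neq_ltn (leq_trans lt_nx) ?leq_addr ?orbT.
by move: (odd _) (_ <= n) (all _ u) (_ == _) (all (op_before x) u) (pairwise _ u)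
  => [] [] [] [] [] [].
Qed.

Lemma is_odd_overpartition_head n x u :
  is_odd_overpartition n (x :: u) -> all (fun p => p.1 <= x.1) u.
Proof.
rewrite is_odd_overpartition_cons => /and4P [_ _ _]; apply: sub_all => p.
by rewrite /op_before => /orP [/ltnW | /andP [/eqP -> _]].
Qed.

Lemma odd_overpartition_candidate n s : is_odd_overpartition n s -> s \in candidates n.
Proof.
elim: s n => [|x u IH] n; first by rewrite mem_candidates.
rewrite is_odd_overpartition_cons => /and4P [odd_x le_xn /IH + _].
rewrite !mem_candidates /= => /andP [le_u u_bnd].
have x_gt0 : 0 < x.1 by case: x.1 odd_x.
rewrite x_gt0 le_xn (leq_ltn_trans le_u) ?ltn_subrL ?x_gt0 ?(leq_trans x_gt0) //=.
by apply: sub_all u_bnd => p /andP [-> /leq_trans ->] //; rewrite leq_subr.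
Qed.

Definition ovp_count (P : pred (seq (nat * bool))) (n : nat) : nat :=
  count (fun s => is_odd_overpartition n s && P s) (candidates n).

Lemma ovp_count_uniq P n (L : seq (seq (nat * bool))) :
  uniq L -> (forall s, (s \in L) = is_odd_overpartition n s && P s) -> ovp_count P n = size L.
Proof.
move=> L_uniq memL; rewrite /ovp_count -size_filter; apply/perm_size/uniq_perm => //.
  exact/filter_uniq/candidates_uniq.
move=> s; rewrite mem_filter memL.
by case s_ovp: (is_odd_overpartition n s); rewrite //= odd_overpartition_candidate ?andbT.
Qed.

Lemma eq_ovp_count P Q n :
  (forall s, is_odd_overpartition n s -> P s = Q s) -> ovp_count P n = ovp_count Q n.
Proof.
by move=> PQ; apply: eq_count => s; case s_ovp: (is_odd_overpartition n s) => //=; apply: PQ.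
Qed.

Lemma ovp_count_split P a n :
  ovp_count P n = ovp_count (predI P a) n + ovp_count (predI P (predC a)) n.
Proof.
rewrite /ovp_count -size_filter -(count_predC a) !count_filter.
by congr addn; apply: eq_count => s /=; rewrite andbC andbA.
Qed.

Lemma ovp_count_cons x P n : odd x.1 ->
  ovp_count (fun s => (ohead s == Some x) && P s) n =
  if x.1 <= n then ovp_count (fun u => all (op_before x) u && P (x :: u)) (n - x.1)
  else 0.
Proof.
move=> odd_x; case: leqP => [le_xn|lt_nx]; last first.
  apply: (@ovp_count_uniq _ _ [::]) => // -[|y u] /=; first by rewrite andbF.
  rewrite is_odd_overpartition_cons; case: eqP => [[->]|]; last by rewrite !andbF.
  by rewrite leqNgt lt_nx andbF.
rewrite [RHS]/ovp_count -size_filter -(size_map (cons x)); apply: ovp_count_uniq.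
  by rewrite map_inj_uniq ?filter_uniq ?candidates_uniq // => u v [].
move=> [|y u]; first by rewrite andbF; apply/negbTE/mapP => -[].
have [->|ne_yx] := eqVneq y x; last first.
  have -> : (ohead (y :: u) == Some x) = false by rewrite /= (inj_eq (@Some_inj _)) (negbTE ne_yx).
  by rewrite andbF; apply/negbTE/mapP => -[v _ [yx _]]; rewrite yx eqxx in ne_yx.
rewrite mem_map; last by move=> v w [].
rewrite mem_filter is_odd_overpartition_cons odd_x le_xn eqxx /=.
case u_ovp: (is_odd_overpartition (n - x.1) u) => //=.
by rewrite odd_overpartition_candidate // andbT.
Qed.

(** * The omoex condition *)

Definition covers_odds (k : nat) s := all (fun i => (2 * i).+1 \in parts s) (iota 0 k).

Lemma find_iota_leq (a : pred nat) L j :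
  has a (iota 0 L) -> ~~ a j -> (find a (iota 0 L) <= j) = has a (iota 0 j).
Proof.
move=> has_a not_aj; set i0 := find a (iota 0 L).
have lt_i0L : i0 < L by rewrite -[X in _ < X](size_iota 0 L) -has_find.
have a_i0 : a i0 by have := nth_find 0 has_a; rewrite nth_iota.
apply/idP/hasP => [le_i0j|[i]].
  exists i0 => //; rewrite mem_iota add0n ltn_neqAle le_i0j andbT.
  by apply: contraNneq not_aj => <-.
rewrite mem_iota => /andP [_ lt_ij] a_i; rewrite leqNgt; apply/negP => lt_ji0.
have lt_ii0 := ltn_trans lt_ij lt_ji0.
by move: (before_find 0 lt_ii0); rewrite nth_iota ?(ltn_trans lt_ii0) // a_i.
Qed.

Lemma has_missing_odd s : has (fun i => (2 * i).+1 \notin parts s) (iota 0 (size s).+1).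
Proof.
apply/negPn/negP => /hasPn all_in.
have sub : {subset [seq (2 * i).+1 | i <- iota 0 (size s).+1] <= parts s}.
  by move=> _ /mapP [i i_in ->]; apply/negPn/all_in.
have odds_uniq : uniq [seq (2 * i).+1 | i <- iota 0 (size s).+1].
  by rewrite map_inj_uniq ?iota_uniq // => i j [] /eqP; rewrite eqn_mul2l => /eqP.
by have := uniq_leq_size odds_uniq sub; rewrite size_map size_iota size_map ltnn.
Qed.

Lemma omoex_leq s j :
  (2 * j).+1 \in parts s -> (omoex s <= (2 * j).+1) = ~~ covers_odds j s.
Proof.
move=> in_s; rewrite /omoex ltnS leq_pmul2l // find_iota_leq ?has_missing_odd ?negbK //.
by rewrite /covers_odds -has_predC.
Qed.

Definition omo_cover s := all (fun p => p.2 ==> ~~ covers_odds p.1./2 s) s.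

Lemma omo_conditionE n s : is_odd_overpartition n s -> omo_condition s = omo_cover s.
Proof.
move=> /and3P [s_odd _ _]; apply: eq_in_all => p p_s /=.
have p_eq : p.1 = (2 * p.1./2).+1.
  by rewrite -{1}(odd_double_half p.1) (allP s_odd p p_s) mul2n.
by rewrite {1}p_eq omoex_leq -?p_eq // map_f.
Qed.

Definition parts_below (k : nat) s := all (fun p => p.1 < 2 * k) s.

Lemma parts_below_cons n k x u :
  is_odd_overpartition n (x :: u) -> parts_below k (x :: u) = (x.1 < 2 * k).
Proof.
move=> /is_odd_overpartition_head u_le; rewrite /parts_below /=.
case: ltnP => //= lt_x; apply: sub_all u_le => p /leq_ltn_trans; exact.
Qed.

Lemma parts_below_head n K s :
  is_odd_overpartition n s -> parts_below K.+1 s -> ~~ parts_below K s ->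
  exists b u, s = ((2 * K).+1, b) :: u.
Proof.
case: s => [|[v b] u] // s_ovp; rewrite !(parts_below_cons _ s_ovp) /= -leqNgt => lt_v ge_v.
move: s_ovp; rewrite is_odd_overpartition_cons /= => /andP [odd_v _]; exists b, u.
have [v_eq|->//] : v = 2 * K \/ v = (2 * K).+1 by lia.
by move: odd_v; rewrite v_eq mul2n odd_double.
Qed.

Lemma parts_below_top n K b u :
  is_odd_overpartition n (((2 * K).+1, b) :: u) ->
  parts_below K.+1 (((2 * K).+1, b) :: u) && ~~ parts_below K (((2 * K).+1, b) :: u).
Proof. by move=> s_ovp; rewrite !(parts_below_cons _ s_ovp) /=; lia. Qed.

Lemma parts_below_mono k l s : k <= l -> parts_below k s -> parts_below l s.
Proof. by move=> le_kl; apply: sub_all => p /leq_trans; apply; rewrite leq_mul2l le_kl orbT. Qed.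

Lemma parts_below_overpartition n K s :
  n < 2 * K -> is_odd_overpartition n s -> parts_below K s.
Proof.
move=> lt_nK /odd_overpartition_candidate; rewrite mem_candidates => /andP [_].
by apply: sub_all => p /andP [_ /leq_ltn_trans]; apply.
Qed.

Lemma all_op_before_cons n b y u :
  is_odd_overpartition n (y :: u) -> all (op_before (y.1, b)) (y :: u) = ~~ y.2.
Proof.
rewrite is_odd_overpartition_cons => /and4P [_ _ _ u_after].
by rewrite /= {1}/op_before ltnn eqxx u_after andbT.
Qed.

Lemma covers_odds_cons j x u : 2 * j <= x.1 -> covers_odds j (x :: u) = covers_odds j u.
Proof.
move=> le_jx; apply: eq_in_all => i; rewrite mem_iota add0n /= in_cons => lt_ij.
by case: eqP => //= i_eq; move: le_jx lt_ij; rewrite -i_eq; lia.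
Qed.

Lemma covers_odds_succ k s : covers_odds k.+1 s = covers_odds k s && ((2 * k).+1 \in parts s).
Proof. by rewrite /covers_odds -[k.+1]addn1 iotaD all_cat /= andbT. Qed.

Lemma covers_odds_top K b u :
  covers_odds K.+1 (((2 * K).+1, b) :: u) = covers_odds K (((2 * K).+1, b) :: u).
Proof. by rewrite covers_odds_succ /= mem_head andbT. Qed.

Lemma parts_below_notin k s : parts_below k s -> (2 * k).+1 \notin parts s.
Proof.
move=> s_below; apply/mapP => -[p /(allP s_below) /= lt_p k_eq].
by move: lt_p; rewrite -k_eq ltnNge leqnSn.
Qed.

Lemma parts_below_op_before K b s : parts_below K s -> all (op_before ((2 * K).+1, b)) s.
Proof. by apply: sub_all => p lt_p; rewrite /op_before /= ltnS ltnW. Qed.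

Lemma omo_cover_cons K b u : all (op_before ((2 * K).+1, b)) u ->
  omo_cover (((2 * K).+1, b) :: u) = (b ==> ~~ covers_odds K u) && omo_cover u.
Proof.
move=> u_after; rewrite /omo_cover [all _ (_ :: _)]/=.
have -> : uphalf (2 * K) = K by rewrite mul2n uphalf_double.
rewrite covers_odds_cons ?leqnSn //; congr andb; apply: eq_in_all => p p_u /=.
case: p p_u => v [] //= p_u; rewrite covers_odds_cons //.
move: (allP u_after _ p_u); rewrite /op_before /= andbF orbF => lt_v.
by rewrite (leq_trans _ (ltnW lt_v)) // mul2n -geq_half_double.
Qed.

(** * Formal power series *)

Local Open Scope ring_scope.

HB.instance Definition _ := Choice.copy fps (nat -> rat).

Lemma faddA : associative fadd.
Proof. by move=> f g h; apply: funext => n; rewrite /fadd addrA. Qed.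

Lemma faddC : commutative fadd.
Proof. by move=> f g; apply: funext => n; rewrite /fadd addrC. Qed.

Lemma fadd0 : left_id (fconst 0) fadd.
Proof. by move=> f; apply: funext => n; rewrite /fadd /fconst; case: eqP; rewrite add0r. Qed.

Lemma faddN : left_inverse (fconst 0) fopp fadd.
Proof. by move=> f; apply: funext => n; rewrite /fadd /fopp /fconst addNr; case: eqP. Qed.

HB.instance Definition _ := GRing.isZmodule.Build fps faddA faddC fadd0 faddN.

Definition trunc (n : nat) (f : fps) : {poly rat} := \poly_(i < n.+1) f i.

Lemma coef_trunc n f i : (i <= n)%N -> (trunc n f)`_i = f i.
Proof. by move=> le_in; rewrite coef_poly ltnS le_in. Qed.

(* A coefficient of degree at most [n] of a product only involves coefficients of degree at
   most [n], so the ring laws of polynomials carry over to [fps]. *)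
Lemma fmul_coefE f g n (p r : {poly rat}) :
  (forall i, (i <= n)%N -> p`_i = f i) -> (forall i, (i <= n)%N -> r`_i = g i) ->
  fmul f g n = (p * r)`_n.
Proof.
move=> pf rg; rewrite coefM /fmul; apply: eq_bigr => i _.
by rewrite pf ?rg ?leq_subr // -ltnS.
Qed.

Lemma fmul_truncE f g n i : (i <= n)%N -> fmul f g i = (trunc n f * trunc n g)`_i.
Proof. by move=> le_in; apply: fmul_coefE => j /= le_ji; rewrite coef_trunc ?(leq_trans le_ji). Qed.

Lemma fmulA : associative fmul.
Proof.
move=> f g h; apply: funext => n.
rewrite (@fmul_coefE _ _ n (trunc n f) (trunc n g * trunc n h)); last 2 first.
- by move=> i; apply: coef_trunc.
- by move=> i le_in; rewrite (fmul_truncE _ _ le_in).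
rewrite (@fmul_coefE _ _ n (trunc n f * trunc n g) (trunc n h)) ?mulrA //.
- by move=> i le_in; rewrite (fmul_truncE _ _ le_in).
- by move=> i; apply: coef_trunc.
Qed.

Lemma fmulC : commutative fmul.
Proof. by move=> f g; apply: funext => n; rewrite !(@fmul_truncE _ _ n n) // mulrC. Qed.

Lemma fmul1 : left_id fone fmul.
Proof.
move=> f; apply: funext => n; rewrite /fmul big_ord_recl /fone /fconst /= mul1r subn0.
by rewrite big1 ?addr0 // => i _; rewrite mul0r.
Qed.

Lemma fmulDl : left_distributive fmul fadd.
Proof.
move=> f g h; apply: funext => n; rewrite /fmul /fadd -big_split /=.
by apply: eq_bigr => i _; rewrite mulrDl.
Qed.

Lemma fone_neq0 : fone != fconst 0.
Proof. by apply/eqP => /(congr1 (fun f : fps => f 0%N)) /eqP; rewrite oner_eq0. Qed.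

HB.instance Definition _ :=
  GRing.Zmodule_isComNzRing.Build fps fmulA fmulC fmul1 fmulDl fone_neq0.

Lemma fps_addE (f g : fps) n : (f + g) n = f n + g n. Proof. by []. Qed.
Lemma fps_oppE (f : fps) n : (- f) n = - f n. Proof. by []. Qed.
Lemma fps_subE (f g : fps) n : (f - g) n = f n - g n. Proof. by []. Qed.
Lemma fps_mulE (f g : fps) n : (f * g) n = \sum_(i < n.+1) f i * g (n - i)%N.
Proof. by []. Qed.
Lemma fps1E n : (1 : fps) n = if n == 0%N then 1 else 0. Proof. by []. Qed.
Lemma fps0E n : (0 : fps) n = 0. Proof. by case: n. Qed.

Lemma fps_sumE I (r : seq I) (P : pred I) (F : I -> fps) n :
  (\sum_(i <- r | P i) F i) n = \sum_(i <- r | P i) F i n.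
Proof. by elim/big_rec2: _ => [|i y1 y2 _ <-]; rewrite ?fps0E. Qed.

Lemma fprodE (s : seq fps) : fprod s = \prod_(x <- s) x.
Proof. by elim: s => [|f s IH]; rewrite ?big_nil // big_cons /= IH. Qed.

Lemma coef_fmonoM c k (f : fps) n :
  (fmono c k * f) n = if (k <= n)%N then c * f (n - k)%N else 0.
Proof.
rewrite mulrC; apply: etrans (@fmul_coefE f _ n (trunc n f) (c *: 'X^k) _ _) _.
- by move=> i; apply: coef_trunc.
- by move=> i _; rewrite coefZ coefXn /fmono; case: (i == k); rewrite ?mulr1 ?mulr0.
rewrite -scalerAr coefZ coefMXn ltnNge; case: leqP => [le_kn|]; last by rewrite mulr0.
by rewrite coef_trunc // leq_subr.
Qed.

Lemma fmonoM c d a b : fmono c a * fmono d b = fmono (c * d) (a + b).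
Proof.
apply: funext => n; rewrite coef_fmonoM /fmono; case: leqP => [le_an|lt_na].
  have -> : (n == a + b)%N = (n - a == b)%N by rewrite -{1}(subnK le_an) addnC eqn_add2l.
  by case: eqP; rewrite ?mulr0.
by case: eqP => // n_ab; move: lt_na; rewrite n_ab ltnNge leq_addr.
Qed.

Lemma fmonoN c k : fmono (- c) k = - fmono c k.
Proof. by apply: funext => n; rewrite fps_oppE /fmono; case: eqP; rewrite ?oppr0. Qed.

Definition eq_upto (N : nat) (f g : fps) := forall i, (i <= N)%N -> f i = g i.

Lemma eq_upto_refl N f : eq_upto N f f.
Proof. by []. Qed.

Lemma eq_upto_sym N f g : eq_upto N f g -> eq_upto N g f.
Proof. by move=> fg i le_iN; rewrite fg. Qed.

Lemma eq_upto_sub N f f' g g' :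
  eq_upto N f f' -> eq_upto N g g' -> eq_upto N (f - g) (f' - g').
Proof. by move=> ff' gg' i le_iN; rewrite !fps_subE ff' ?gg'. Qed.

Lemma eq_upto_mul N f f' g g' :
  eq_upto N f f' -> eq_upto N g g' -> eq_upto N (f * g) (f' * g').
Proof.
move=> ff' gg' i le_iN; rewrite !fps_mulE; apply: eq_bigr => j _.
by rewrite ff' ?gg' ?(leq_trans (leq_subr _ _) le_iN) // (leq_trans _ le_iN) // -ltnS.
Qed.

Lemma eq_upto_prod1 N (I : eqType) (r : seq I) (F : I -> fps) :
  (forall i, i \in r -> eq_upto N (F i) 1) -> eq_upto N (\prod_(i <- r) F i) 1.
Proof.
elim: r => [|i r IH] F1; first by rewrite big_nil.
rewrite big_cons -[X in eq_upto _ _ X]mulr1.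
apply: eq_upto_mul; first by apply: F1; rewrite inE eqxx.
by apply: IH => j r_j; apply: F1; rewrite inE r_j orbT.
Qed.

Lemma coef0_mul (f g : fps) : (f * g) 0%N = f 0%N * g 0%N.
Proof. by rewrite fps_mulE big_ord1. Qed.

Lemma size_finv_list (f : fps) m : size (finv_list f m) = m.+1.
Proof. by elim: m => //= m IH; rewrite size_rcons IH. Qed.

Lemma nth_finv_list (f : fps) m i : (i <= m)%N -> nth 0 (finv_list f m) i = finv f i.
Proof.
elim: m => [|m IH]; first by rewrite leqn0 => /eqP ->.
rewrite leq_eqVlt => /orP [/eqP -> //|lt_im].
by rewrite /= nth_rcons size_finv_list lt_im IH.
Qed.

Lemma finvS (f : fps) m :
  finv f m.+1 = - (f 0%N)^-1 * \sum_(i < m.+1) f i.+1 * finv f (m - i)%N.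
Proof.
rewrite {1}/finv /= nth_rcons size_finv_list ltnn eqxx; congr (_ * _).
rewrite -(big_mkord xpredT (fun i => f i.+1 * finv f (m - i)%N)) (big_add1 _ _ 0 m.+2).
by apply: eq_bigr => i _; rewrite subSS nth_finv_list // leq_subr.
Qed.

Lemma mul_finv (f : fps) : f 0%N != 0 -> f * finv f = 1.
Proof.
move=> f0; apply: funext => -[|m]; first by rewrite coef0_mul /finv /= mulfV.
rewrite fps_mulE big_ord_recl subn0 finvS mulrA mulrN mulfV // mulN1r.
rewrite [RHS]/= addrC; apply/eqP; rewrite subr_eq0; apply/eqP.
by apply: eq_bigr => i _.
Qed.

Lemma finv_unique (f g : fps) : f 0%N != 0 -> f * g = 1 -> finv f = g.
Proof. by move=> f0 fg; rewrite -[finv f]mul1r -fg mulrAC mul_finv // mul1r. Qed.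

Lemma eq_upto_finv N (f g : fps) :
  f 0%N != 0 -> eq_upto N f g -> eq_upto N (finv f) (finv g).
Proof.
move=> f0 fg; have g0 : g 0%N != 0 by rewrite -fg.
have := eq_upto_mul (@eq_upto_refl N (finv f)) (eq_upto_mul fg (@eq_upto_refl N (finv g))).
by rewrite mulrA (mulrC (finv f)) !mul_finv // mul1r mulr1; apply: eq_upto_sym.
Qed.

Lemma fnegqB : zmod_morphism fnegq.
Proof. by move=> f g; apply: funext => n; rewrite /fnegq !fps_subE mulrBr. Qed.

Lemma fnegq_monoid : monoid_morphism fnegq.
Proof.
split; first by apply: funext => -[|n]; rewrite /fnegq ?mulr0 // expr0 mul1r.
move=> f g; apply: funext => n; rewrite /fnegq !fps_mulE mulr_sumr.
apply: eq_bigr => -[i /= lt_in] _.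
by rewrite -{1}(subnKC (_ : i <= n)%N) -1?ltnS // exprD; ring.
Qed.

HB.instance Definition _ := GRing.isZmodMorphism.Build fps fps fnegq fnegqB.
HB.instance Definition _ := GRing.isMonoidMorphism.Build fps fps fnegq fnegq_monoid.

Lemma fnegq_fmono c k : fnegq (fmono c k) = fmono ((-1) ^+ k * c) k.
Proof. by apply: funext => n; rewrite /fnegq /fmono; case: eqP => [->|]; rewrite ?mulr0. Qed.

Lemma fnegq_finv f : f 0%N != 0 -> fnegq (finv f) = finv (fnegq f).
Proof.
move=> f0; apply/esym/finv_unique; last by rewrite -rmorphM mul_finv ?rmorph1.
by rewrite /fnegq expr0 mul1r.
Qed.

(** * q-Pochhammer symbols and the series F *)

Lemma qfactorE c e b k : qfactor c e b k = 1 - fmono c (e + b * k).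
Proof. by []. Qed.

Lemma qpochE c e b K : qpoch c e b K = \prod_(k < K) qfactor c e b k.
Proof. by rewrite /qpoch fprodE big_map -(big_mkord xpredT) /index_iota subn0. Qed.

Lemma qpochS c e b K : qpoch c e b K.+1 = qpoch c e b K * qfactor c e b K.
Proof. by rewrite !qpochE big_ord_recr. Qed.

Lemma qpoch_coef0 c e b K : (0 < e)%N -> qpoch c e b K 0%N = 1.
Proof.
move=> e_gt0; rewrite qpochE; elim/big_rec: _ => // k f _ f0.
by rewrite coef0_mul f0 mulr1 qfactorE fps_subE /fmono eq_sym addn_eq0 eqn0Ngt e_gt0 subr0.
Qed.

Lemma qpoch_neq0 c e b K : (0 < e)%N -> qpoch c e b K 0%N != 0.
Proof. by move=> e_gt0; rewrite qpoch_coef0 ?oner_eq0. Qed.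

Lemma eq_upto_qfactor c e b k N : (N < e + b * k)%N -> eq_upto N (qfactor c e b k) 1.
Proof.
move=> lt_N i le_iN; rewrite qfactorE fps_subE /fmono.
by case: eqP => [i_eq|_]; [move: lt_N; rewrite -i_eq ltnNge le_iN | rewrite subr0].
Qed.

Lemma eq_upto_fprodinf (F : nat -> fps) N K :
  (forall k, eq_upto k (F k) 1) -> (N < K)%N -> eq_upto N (fprodinf F) (\prod_(k < K) F k).
Proof.
move=> F1 lt_NK i le_iN; have le_iK : (i.+1 <= K)%N by apply: leq_ltn_trans lt_NK.
rewrite /fprodinf fprodE big_map -(big_mkord xpredT) (big_cat_nat (leq0n i.+1) le_iK) /=.
rewrite -[X in X i = _]mulr1; apply: eq_upto_mul => //.
apply/eq_upto_sym/eq_upto_prod1 => k; rewrite mem_index_iota => /andP [lt_ik _] j le_ji.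
by apply: F1; rewrite (leq_trans le_ji) // ltnW.
Qed.

Lemma eq_upto_fsuminf (T : nat -> fps) N K :
  (forall k i, (i < k)%N -> T k i = 0) -> (N < K)%N ->
  eq_upto N (fsuminf T) (\sum_(k < K) T k).
Proof.
move=> T0 lt_NK i le_iN; have le_iK : (i.+1 <= K)%N by apply: leq_ltn_trans lt_NK.
rewrite /fsuminf fps_sumE -[RHS](big_mkord xpredT (fun k => T k i)).
rewrite (big_cat_nat (leq0n i.+1) le_iK) /= [X in _ = _ + X]big1_seq ?addr0 ?big_mkord //.
by move=> k /andP [_]; rewrite mem_index_iota => /andP [lt_ik _]; apply: T0.
Qed.

Lemma eq_upto_qpoch_inf c e b N K : (0 < e)%N -> (0 < b)%N -> (N < K)%N ->
  eq_upto N (qpoch_inf c e b) (qpoch c e b K).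
Proof.
move=> e_gt0 b_gt0 lt_NK; rewrite qpochE; apply: eq_upto_fprodinf => // k.
by apply: eq_upto_qfactor; rewrite -add1n leq_add // leq_pmull.
Qed.

Definition qodd (K : nat) : fps := fmono 1 (1 + 2 * K).

Lemma qfactor1E K : qfactor 1 1 2 K = 1 - qodd K.
Proof. by []. Qed.

Lemma qfactorN1E K : qfactor (-1) 1 2 K = 1 + qodd K.
Proof. by rewrite qfactorE fmonoN opprK. Qed.

Lemma qodd_fmono_sq K : qodd K * fmono 1 (K ^ 2) = fmono 1 (K.+1 ^ 2).
Proof. by rewrite fmonoM mul1r; congr fmono; ring. Qed.

Lemma fnegq_qpoch K : fnegq (qpoch 1 1 2 K) = qpoch (-1) 1 2 K.
Proof.
rewrite !qpochE rmorph_prod; apply: eq_bigr => k _.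
by rewrite !qfactorE rmorphB rmorph1 /= fnegq_fmono -signr_odd oddD oddM mulr1.
Qed.

Definition Fneg_partial (K : nat) : fps :=
  \sum_(k < K) fmono 1 (k.+1 ^ 2) * finv (qpoch (-1) 1 2 k.+1).

Lemma fnegq_fsuminf (T : nat -> fps) : fnegq (fsuminf T) = fsuminf (fnegq \o T).
Proof. by apply: funext => n; rewrite /fnegq /fsuminf mulr_sumr. Qed.

Lemma eq_upto_fnegq_Fser n : eq_upto n (fnegq Fser) (Fneg_partial n.+1).
Proof.
have sign_even k : (-1) ^+ (k.+1 ^ 2) * (-1) ^+ k.+1 = 1 :> rat.
  by rewrite -exprD -signr_odd oddD oddX /= addbb.
have fnegq_term k : fnegq (fdiv (fmono ((-1) ^+ k.+1) (k.+1 ^ 2)) (qpoch 1 1 2 k.+1)) =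
                    fmono 1 (k.+1 ^ 2) * finv (qpoch (-1) 1 2 k.+1).
  by rewrite rmorphM /= fnegq_fmono sign_even fnegq_finv ?qpoch_neq0 // fnegq_qpoch.
rewrite /Fser fnegq_fsuminf (congr1 fsuminf (funext fnegq_term)).
apply: eq_upto_fsuminf => // k i lt_ik; rewrite coef_fmonoM ifN // -ltnNge.
by rewrite (leq_trans lt_ik) // (leq_trans (leqnSn k)) // leq_pmulr.
Qed.

(** * Generating functions and their recurrences *)

Definition ovp_gf (P : pred (seq (nat * bool))) : fps := fun n => (ovp_count P n)%:R.

Lemma eq_ovp_gf P Q :
  (forall n s, is_odd_overpartition n s -> P s = Q s) -> ovp_gf P = ovp_gf Q.
Proof. by move=> PQ; apply: funext => n; rewrite /ovp_gf (eq_ovp_count (PQ n)). Qed.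

Lemma ovp_gf_split P a : ovp_gf P = ovp_gf (predI P a) + ovp_gf (predI P (predC a)).
Proof. by apply: funext => n; rewrite fps_addE /ovp_gf (ovp_count_split P a) natrD. Qed.

Lemma ovp_gf_pred0 P : P =1 xpred0 -> ovp_gf P = 0.
Proof.
move=> P0; apply: funext => n; rewrite fps0E /ovp_gf (@ovp_count_uniq _ _ [::]) // => s.
by rewrite P0 andbF.
Qed.

Lemma ovp_gf_cons x P : odd x.1 ->
  ovp_gf (fun s => (ohead s == Some x) && P s) =
  fmono 1 x.1 * ovp_gf (fun u => all (op_before x) u && P (x :: u)).
Proof.
move=> odd_x; apply: funext => n; rewrite coef_fmonoM /ovp_gf ovp_count_cons //.
by case: leqP; rewrite ?mul1r.
Qed.

(* [low_gf K c] counts the overpartitions satisfying the omoex condition with all parts below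
   [2K], filtered by [c] applied to whether every odd number below [2K] is a part;
   [top_gf K b c] counts those whose largest part is [2K+1], its first copy overlined iff
   [b]. *)
Definition low_gf K (c : bool -> bool) : fps :=
  ovp_gf (fun s => [&& parts_below K s, omo_cover s & c (covers_odds K s)]).

Definition top_gf K b (c : bool -> bool) : fps :=
  ovp_gf (fun s => [&& ohead s == Some ((2 * K).+1, b), parts_below K.+1 s, omo_cover s
                    & c (covers_odds K s)]).

Lemma low_gf0 (c : bool -> bool) : c true -> low_gf 0 c = 1.
Proof.
move=> c_true; apply: funext => n; rewrite /low_gf /ovp_gf fps1E.
rewrite (@ovp_count_uniq _ _ (if n == 0%N then [:: [::]] else [::])); try by case: eqP.
case=> [|x u]; first by rewrite is_odd_overpartition_nil /= c_true; case: eqP.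
by rewrite /= andbF; case: eqP.
Qed.

Lemma low_gf_succ K c :
  low_gf K.+1 c = low_gf K (fun _ => c false) + top_gf K false c + top_gf K true c.
Proof.
rewrite /low_gf (ovp_gf_split _ (parts_below K)).
rewrite [X in _ + X = _](ovp_gf_split _ (fun s => ohead s == Some ((2 * K).+1, false))) addrA.
congr (_ + _ + _); apply: eq_ovp_gf => n s s_ovp /=.
- case s_below: (parts_below K s); last by rewrite andbF.
  rewrite (parts_below_mono _ s_below) // covers_odds_succ.
  by rewrite (negbTE (parts_below_notin s_below)) andbF andbT.
- case: eqP => [s_head|]; last by rewrite !andbF.
  case: s s_ovp s_head => [|y u] // s_ovp [y_eq]; subst y.
  by have /andP [-> ->] := parts_below_top s_ovp; rewrite covers_odds_top !andbT.
- have [s_head|not_head] := eqVneq (ohead s) (Some ((2 * K).+1, true)).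
    case: s s_ovp s_head => [|y u] // s_ovp [y_eq]; subst y.
    have /andP [-> ->] := parts_below_top s_ovp.
    by rewrite covers_odds_top /= (inj_eq (@Some_inj _)) xpair_eqE !eqxx !andbT.
  apply/negbTE/negP => /andP [/andP [/and3P [below1 _ _] below0] not_false].
  have [[] [u s_eq]] := parts_below_head s_ovp below1 below0.
    by rewrite s_eq /= eqxx in not_head.
  by rewrite s_eq /= eqxx in not_false.
Qed.

(* Remove the first copy of [2K+1]: what remains has all parts below [2K] or starts with a
   non-overlined [2K+1]. *)
Lemma top_gf_rec K b c (c' := fun t => c t && (b ==> ~~ t)) :
  top_gf K b c = qodd K * (low_gf K c' + top_gf K false c').
Proof.
rewrite /top_gf ovp_gf_cons; last by rewrite /= mul2n odd_double.
congr (_ * _).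
have lt_top : ((2 * K).+1 < 2 * K.+1)%N by rewrite mulnS.
rewrite (@eq_ovp_gf _ (fun u => [&& all (op_before ((2 * K).+1, b)) u, parts_below K.+1 u,
                                   omo_cover u & c' (covers_odds K u)])); last first.
  move=> n u _ /=; case u_after: (all _ u) => //=.
  rewrite lt_top omo_cover_cons // covers_odds_cons ?leqnSn // /c'.
  by move: (parts_below _ u) (omo_cover u) (c _) (b ==> _) => [] [] [] [].
rewrite (ovp_gf_split _ (parts_below K)); congr (_ + _); apply: eq_ovp_gf => n u u_ovp /=.
  case u_below: (parts_below K u); last by rewrite andbF.
  by rewrite parts_below_op_before // (parts_below_mono _ u_below) // andbT.
case below1: (parts_below K.+1 u); last by rewrite !andbF.
case below0: (parts_below K u) => /=.
  rewrite andbF; case: u u_ovp below0 below1 => [|y u] // u_ovp below0 _.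
  apply/esym/negbTE/negP => /and3P [/eqP [y_eq] _ _]; subst y.
  by move: (parts_below_top u_ovp); rewrite below0 andbF.
have [b' [u' u_eq]] := parts_below_head u_ovp below1 (negbT below0); subst u.
rewrite (all_op_before_cons _ u_ovp) /= (inj_eq (@Some_inj _)) xpair_eqE eqxx andbT.
by case: b' {below0 below1 u_ovp}.
Qed.

Lemma low_gf_ext K c1 c2 : c1 =1 c2 -> low_gf K c1 = low_gf K c2.
Proof. by move=> c12; apply: eq_ovp_gf => n s _; rewrite c12. Qed.

Lemma top_gf_ext K b c1 c2 : c1 =1 c2 -> top_gf K b c1 = top_gf K b c2.
Proof. by move=> c12; apply: eq_ovp_gf => n s _; rewrite c12. Qed.

Lemma low_gf_false K : low_gf K xpred0 = 0.
Proof. by apply: ovp_gf_pred0 => s; rewrite /= !andbF. Qed.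

Lemma top_gf_false K b : top_gf K b xpred0 = 0.
Proof. by apply: ovp_gf_pred0 => s; rewrite /= !andbF. Qed.

Definition omo_gf K : fps := low_gf K (fun _ => true).
Definition omo_gf_full K : fps := low_gf K id.

Lemma omo_gf_split K : omo_gf K = omo_gf_full K + low_gf K negb.
Proof.
rewrite /omo_gf /omo_gf_full /low_gf (ovp_gf_split _ (covers_odds K)).
congr (_ + _); apply: eq_ovp_gf => n s _ /=;
  by move: (parts_below K s) (omo_cover s) (covers_odds K s) => [] [] [].
Qed.

Lemma omo_gf_rec K : (1 - qodd K) * omo_gf K.+1 =
  (1 - qodd K) * omo_gf K + qodd K * (2 * omo_gf K - omo_gf_full K).
Proof.
set v := qodd K; set N := low_gf K negb.
set T := top_gf K false (fun _ => true); set TN := top_gf K false negb.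
have T_rec : T = v * (omo_gf K + T) := top_gf_rec K false (fun _ => true).
have TN_rec : TN = v * (N + TN).
  by rewrite {1}/TN top_gf_rec (@low_gf_ext _ _ negb) ?(@top_gf_ext _ _ _ negb) //; case.
have T'_rec : top_gf K true (fun _ => true) = v * (N + TN) := top_gf_rec K true (fun _ => true).
have T_eq : (1 - v) * T = v * omo_gf K by rewrite mulrBl mul1r {1}T_rec; ring.
have TN_eq : (1 - v) * TN = v * N by rewrite mulrBl mul1r {1}TN_rec; ring.
rewrite {1}/omo_gf low_gf_succ -/(omo_gf K) -/T T'_rec.
transitivity ((1 - v) * omo_gf K + (1 - v) * T + v * ((1 - v) * N + (1 - v) * TN)).
  by ring.
by rewrite T_eq TN_eq omo_gf_split -/N; ring.
Qed.

Lemma omo_gf_full_rec K : (1 - qodd K) * omo_gf_full K.+1 = qodd K * omo_gf_full K.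
Proof.
set v := qodd K; set H := omo_gf_full K; set T := top_gf K false id.
have T_rec : T = v * (H + T).
  rewrite {1}/T top_gf_rec (@low_gf_ext _ _ id) ?(@top_gf_ext _ _ _ id) //; by case.
have T'_rec : top_gf K true id = 0.
  have c'0 : (fun t => t && (true ==> ~~ t)) =1 xpred0 by case.
  rewrite top_gf_rec (low_gf_ext _ c'0) (top_gf_ext _ _ c'0).
  by rewrite low_gf_false top_gf_false addr0 mulr0.
rewrite /omo_gf_full low_gf_succ low_gf_false add0r -/T T'_rec addr0.
by rewrite mulrBl mul1r {1}T_rec; ring.
Qed.

(** * Solving the recurrences *)

Section ClosedForms.

Variables G H : nat -> fps.
Hypotheses (G0 : G 0%N = 1) (H0 : H 0%N = 1).
Hypothesis G_rec : forall K,
  (1 - qodd K) * G K.+1 = (1 - qodd K) * G K + qodd K * (2 * G K - H K).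
Hypothesis H_rec : forall K, (1 - qodd K) * H K.+1 = qodd K * H K.

Lemma H_mul_qpoch K : H K * qpoch 1 1 2 K = fmono 1 (K ^ 2).
Proof.
elim: K => [|K IH]; first by rewrite H0 mul1r.
rewrite qpochS qfactor1E.
transitivity (qpoch 1 1 2 K * ((1 - qodd K) * H K.+1)); first by ring.
by rewrite H_rec mulrCA (mulrC (qpoch _ _ _ _)) IH qodd_fmono_sq.
Qed.

Lemma G_mul_qpoch K : G K * qpoch 1 1 2 K = qpoch (-1) 1 2 K * (1 - Fneg_partial K).
Proof.
elim: K => [|K IH]; first by rewrite G0 /Fneg_partial big_ord0 subr0 mul1r.
rewrite qpochS qfactor1E.
transitivity (qpoch 1 1 2 K * ((1 - qodd K) * G K.+1)); first by ring.
rewrite G_rec.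
transitivity ((1 + qodd K) * (G K * qpoch 1 1 2 K) - qodd K * (H K * qpoch 1 1 2 K)).
  by ring.
rewrite IH H_mul_qpoch qodd_fmono_sq /Fneg_partial big_ord_recr /= -/(Fneg_partial K).
set B := qpoch (-1) 1 2 K.+1.
transitivity (B * (1 - Fneg_partial K) - fmono 1 (K.+1 ^ 2) * (B * finv B)); last by ring.
by rewrite mul_finv ?qpoch_neq0 // /B qpochS qfactorN1E; ring.
Qed.

Lemma coef_G_rhs n : G n.+1 n = rhs_series n.
Proof.
pose A := qpoch 1 1 2 n.+1; pose B := qpoch (-1) 1 2 n.+1.
have A0 : A 0%N != 0 by apply: qpoch_neq0.
have rhs_upto : eq_upto n rhs_series (B * finv A * (1 - Fneg_partial n.+1)).
  apply: eq_upto_mul; last exact/eq_upto_sub/eq_upto_fnegq_Fser.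
  apply: eq_upto_mul; first exact: eq_upto_qpoch_inf.
  by apply/eq_upto_sym/eq_upto_finv/eq_upto_sym/eq_upto_qpoch_inf.
by rewrite rhs_upto // mulrAC -G_mul_qpoch -mulrA mul_finv // mulr1.
Qed.

End ClosedForms.

Theorem mainTheorem1 : forall n : nat, Mbar_o n = rhs_series n.
Proof.
move=> n; have lt_n : (n < 2 * n.+1)%N by rewrite mulSn addSn ltnS leq_addr.
rewrite -(coef_G_rhs (@low_gf0 xpredT erefl) (@low_gf0 id erefl) omo_gf_rec omo_gf_full_rec).
rewrite /Mbar_o /mbar_o; congr _%:R; apply: eq_ovp_count => s s_ovp.
by rewrite (omo_conditionE s_ovp) (parts_below_overpartition lt_n s_ovp) andbT.
Qed.
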